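(* Let $K$ be a number field. Let $a_1,b_1\in\mathcal{O}_K$ with $b_1\notin\mathcal{O}_K^\times\cup\{0\}$ such that $a_1/b_1$ is a reduced fraction and $\mathfrak{g}_1:=\langle a_1,b_1\rangle$ is a non-principal inseverable ideal. Let $b_2\in\mathcal{O}_K\setminus\{0\}$ be such that $b_2$ is not an associate of $b_1$ (i.e. $b_2\mathcal{O}_K\neq b_1\mathcal{O}_K$). Then there exists $a_2\in\mathcal{O}_K$ such that $a_2/b_2=a_1/b_1$ and $a_2/b_2$ is a reduced fraction if and only if there is an inseverable ideal $\mathfrak{g}_2\neq\mathfrak{g}_1$ with \[\frac{\langle b_1\rangle}{\mathfrak{g}_1}=\frac{\langle b_2\rangle}{\mathfrak{g}_2}.\] In particular, in this case $[\mathfrak{g}_1]=[\mathfrak{g}_2]$ in the class group of $K$.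
   Context: $\langle x_1,\dots,x_n\rangle$ denotes the $\mathcal{O}_K$-ideal generated by $x_1,\dots,x_n$; $[\mathfrak{a}]$ denotes the ideal class of $\mathfrak{a}$. A fraction $a/b$ ($b\ne0$) is reduced if no non-unit of $\mathcal{O}_K$ divides both $a$ and $b$. A nonzero ideal of $\mathcal{O}_K$ is inseverable if the only principal ideal containing it is $\mathcal{O}_K$. *)

From HB Require Import structures.
From mathcomp Require Import all_boot all_order all_algebra all_field.
Set Implicit Arguments. Unset Strict Implicit. Unset Printing Implicit Defensive.
Import GRing.Theory Num.Theory.
Local Open Scope ring_scope.

Section NumberField.
Variable K : fieldExtType rat.

Definition OK (x : K) : Prop :=
  exists p : {poly int}, p \is monic /\ root (map_poly (fun z : int => z%:~R : K) p) x.

Definition OK_unit (x : K) : Prop := OK x /\ exists y, OK y /\ x * y = 1.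

Definition OK_dvd (d a : K) : Prop := exists k, OK k /\ a = d * k.

Definition reduced_frac (a b : K) : Prop :=
  b != 0 /\ forall d, OK d -> ~ OK_unit d -> OK_dvd d a -> OK_dvd d b -> False.

Definition is_ideal (I : K -> Prop) : Prop :=
  (forall x, I x -> OK x) /\ I 0 /\
  (forall x y, I x -> I y -> I (x + y)) /\
  (forall r x, OK r -> I x -> I (r * x)).

Definition ideal_eq (I J : K -> Prop) : Prop := forall x, I x <-> J x.

Definition gen1 (a : K) : K -> Prop := fun x => exists r, OK r /\ x = r * a.
Definition gen2 (a b : K) : K -> Prop :=
  fun x => exists r s, OK r /\ OK s /\ x = r * a + s * b.

Definition principal (I : K -> Prop) : Prop := exists c, OK c /\ ideal_eq I (gen1 c).

Definition inseverable (I : K -> Prop) : Prop :=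
  is_ideal I /\ (exists x, I x /\ x != 0) /\
  forall c, OK c -> (forall x, I x -> gen1 c x) -> ideal_eq (gen1 c) OK.

(* quotient of (fractional) ideals I / J = I J^{-1} = { x in K | x J ⊆ I } *)
Definition ideal_div (I J : K -> Prop) : K -> Prop :=
  fun x => forall y, J y -> I (x * y).

Definition same_class (I J : K -> Prop) : Prop :=
  exists alpha beta, OK alpha /\ OK beta /\ alpha != 0 /\ beta != 0 /\
    ideal_eq (fun x => exists y, I y /\ x = alpha * y)
             (fun x => exists y, J y /\ x = beta * y).
End NumberField.

(* Put x := a1 / b1 and D_x := {t in O_K | t x in O_K}. For every a / b = x with
   b != 0 we have <b> / <a, b> = D_x, and D_x (1, x) = O_K. Since O_K is a
   Dedekind domain (nonzero ideals are finitely generated, by the integrality and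
   nondegeneracy of the trace form, and invertible, by D_x (1, x) = O_K and
   Pruefer's trick), <b2> / g2 = D_x forces g2 = b2 (1, x) = <b2 x, b2>. So
   a2 := b2 x is the only candidate, b1 g2 = b2 g1, and <a, b> is inseverable
   exactly when a / b is reduced; finally <a2, b2> = g1 would give <b2> = <b1>. *)

From HB Require Import structures.
From mathcomp Require Import all_boot all_order all_algebra all_field.
From mathcomp Require Import ring.
From Stdlib Require Import Classical.
Import GRing.Theory Num.Theory passmx.
Local Open Scope ring_scope.

Section NumberField.
Context {K : fieldExtType rat}.
Implicit Types (a b x y z t u w : K) (S T I : K -> Prop).

Lemma OKE x : OK x <-> integralOver (intr : int -> K) x.
Proof. by split=> -[p [? ?]]; exists p. Qed.

Lemma OK_intr (m : int) : OK (m%:~R : K).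
Proof. exact/OKE/integral_id. Qed.

Lemma OK_natr n : OK (n%:R : K). Proof. exact: OK_intr n. Qed.

Lemma OK0 : OK (0 : K). Proof. exact: OK_intr 0. Qed.
Lemma OK1 : OK (1 : K). Proof. exact: OK_intr 1. Qed.

Lemma OKD {x y} : OK x -> OK y -> OK (x + y).
Proof. by move=> /OKE ? /OKE ?; apply/OKE/integral_add. Qed.

Lemma OKN {x} : OK x -> OK (- x).
Proof. by move=> /OKE ?; apply/OKE/integral_opp. Qed.

Lemma OKB {x y} : OK x -> OK y -> OK (x - y).
Proof. by move=> ? ?; apply/OKD/OKN. Qed.

Lemma OKM {x y} : OK x -> OK y -> OK (x * y).
Proof. by move=> /OKE ? /OKE ?; apply/OKE/integral_mul. Qed.

Lemma OKX {x} n : OK x -> OK (x ^+ n).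
Proof. by move=> ?; elim: n => [|n IHn]; rewrite ?expr0 ?exprS; [apply: OK1 | apply: OKM]. Qed.

Lemma OK_sum (I : Type) (r : seq I) (P : pred I) (F : I -> K) :
  (forall i, P i -> OK (F i)) -> OK (\sum_(i <- r | P i) F i).
Proof. by move=> OKF; elim/big_rec: _ => [|i s /OKF]; [apply: OK0 | apply: OKD]. Qed.

Lemma OK_root_monic (p : {poly K}) x :
  p \is monic -> root p x -> (forall i, OK p`_i) -> OK x.
Proof.
move=> mon_p px OKp; apply/OKE/(integral_root_monic mon_p px).
by apply/integral_poly => i; apply/OKE.
Qed.

Lemma OK_lead_coef_mul_root (p : {poly K}) x :
  (forall i, OK p`_i) -> p != 0 -> root p x -> OK (lead_coef p * x).
Proof.
move=> OKp p_neq0 px; set c := lead_coef p; set n := (size p).-1.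
have size_p : size p = n.+1 by rewrite /n prednK // size_poly_gt0.
have n_gt0 : (0 < n)%N by rewrite -ltnS -size_p (root_size_gt1 p_neq0 px).
(* c ^+ n.-1 * p ('X / c) is a monic polynomial with integral coefficients *)
pose E i := if i == n then 1 else p`_i * c ^+ (n.-1 - i).
pose q := \poly_(i < n.+1) E i.
have size_q : size q = n.+1 by rewrite size_poly_eq // /E eqxx oner_neq0.
apply: (@OK_root_monic q).
- by rewrite monicE /lead_coef size_q /q coef_poly ltnSn /E eqxx.
- rewrite /root /q horner_poly big_ord_recr /= /E eqxx mul1r.
  have -> : \sum_(i < n) (if (i : nat) == n then 1 else p`_i * c ^+ (n.-1 - i))
              * (c * x) ^+ i = c ^+ n.-1 * \sum_(i < n) p`_i * x ^+ i.
    rewrite mulr_sumr; apply: eq_bigr => i _.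
    rewrite (ltn_eqF (ltn_ord i)) exprMn.
    have -> : c ^+ n.-1 = c ^+ (n.-1 - i) * c ^+ i.
      by rewrite -exprD subnK // -ltnS prednK.
    by ring.
  have -> : (c * x) ^+ n = c ^+ n.-1 * (c * x ^+ n).
    by rewrite exprMn -{1}(prednK n_gt0) exprS; ring.
  move: px; rewrite -mulrDr /root horner_coef size_p big_ord_recr /= => /eqP ->.
  by rewrite /c /lead_coef size_p mulr0.
- move=> i; rewrite /q coef_poly; case: ifP => _; last exact: OK0.
  rewrite /E; case: eqP => _; first exact: OK1.
  by apply/OKM/OKX/OKp.
Qed.

Lemma OK_coef_divXsubC x (q : {poly K}) :
  (forall i, OK (q * ('X - x%:P))`_i) -> forall i, OK q`_i.
Proof.
elim: {q}(size q) {-2}q (leqnn (size q)) => [|N IHN] q size_q OKqX i.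
  by move: size_q; rewrite size_poly_leq0 => /eqP ->; rewrite coef0; apply: OK0.
have [->|q_neq0] := eqVneq q 0; first by rewrite coef0; apply: OK0.
set m := (size q).-1; set c := lead_coef q.
have size_qE : size q = m.+1 by rewrite /m prednK // size_poly_gt0.
have lead_qX : lead_coef (q * ('X - x%:P)) = c.
  by rewrite lead_coefM lead_coefXsubC mulr1.
have OKc : OK c by rewrite -lead_qX; apply: OKqX.
have OKcx : OK (c * x).
  rewrite -lead_qX; apply: OK_lead_coef_mul_root => //.
    by rewrite mulf_neq0 // polyXsubC_eq0.
  by rewrite rootM root_XsubC eqxx orbT.
(* c and c * x are integral, so q - c 'X^m inherits the hypothesis. *)
have q'E : take_poly m q = q - c *: 'X^m.
  apply/polyP => j; rewrite coef_take_poly coefB coefZ coefXn.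
  case: ltngtP => [| m_lt_j | ->]; rewrite ?mulr0 ?subr0 //.
    by rewrite nth_default // size_qE.
  by rewrite mulr1 /c /lead_coef size_qE subrr.
have OKq' : forall j, OK (take_poly m q)`_j.
  apply: IHN => [|j]; first by rewrite (leq_trans (size_take_poly _ _)) // -ltnS -size_qE.
  rewrite q'E mulrBl.
  have -> : c *: 'X^m * ('X - x%:P) = c *: 'X^(m.+1) - (c * x) *: 'X^m.
    by rewrite -!mul_polyC exprSr polyCM; ring.
  rewrite !coefB !coefZ !coefXn.
  by apply/OKB/OKB; [apply: OKqX | apply/OKM/OK_natr..].
case: (ltngtP i m) => [i_lt_m | m_lt_i | ->] //.
- by have := OKq' i; rewrite coef_take_poly i_lt_m.
- by rewrite nth_default ?size_qE //; apply: OK0.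
Qed.

Definition submodule (P : K -> Prop) : Prop :=
  [/\ P 0, forall y z, P y -> P z -> P (y + z) & forall r y, OK r -> P y -> P (r * y)].

Inductive ispan S : K -> Prop :=
  | ispan_gen s of S s : ispan S s
  | ispan0 : ispan S 0
  | ispanD y z of ispan S y & ispan S z : ispan S (y + z)
  | ispanM r y of OK r & ispan S y : ispan S (r * y).
Arguments ispan_gen {S s}.

Lemma ispan_min {S} {P : K -> Prop} :
  submodule P -> (forall s, S s -> P s) -> forall w, ispan S w -> P w.
Proof. by move=> [P0 PD PM] PS w; elim=> *; auto. Qed.

Lemma submodule_OK : submodule (@OK K).
Proof. by split; [apply: OK0 | exact: @OKD | exact: @OKM]. Qed.

Lemma submodule_ispan S : submodule (ispan S).
Proof. by split; [apply: ispan0 | apply: ispanD | apply: ispanM]. Qed.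

Lemma submodule_ideal {I} : is_ideal I -> submodule I.
Proof. by case=> _ [I0 [ID IM]]; split. Qed.

Lemma submodule_gen2 a b : submodule (gen2 a b).
Proof.
split=> [|_ _ [r [s [? [? ->]]]] [r' [s' [? [? ->]]]]|q _ ? [r [s [? [? ->]]]]].
- by exists 0, 0; split; [apply: OK0 | split; [apply: OK0 | ring]].
- by exists (r + r'), (s + s'); do 2 (split; first exact: OKD); ring.
- by exists (q * r), (q * s); do 2 (split; first exact: OKM); ring.
Qed.

Lemma submodule_mull {P : K -> Prop} t : submodule P -> submodule (fun z => P (t * z)).
Proof.
case=> P0 PD PM; split=> [|y z|r y]; rewrite ?mulr0 ?mulrDr //; first exact: PD.
by rewrite mulrCA; apply: PM.
Qed.

Lemma submodule_mulr {P : K -> Prop} t : submodule P -> submodule (fun z => P (z * t)).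
Proof.
case=> P0 PD PM; split=> [|y z|r y]; rewrite ?mul0r ?mulrDl //; first exact: PD.
by rewrite -mulrA; apply: PM.
Qed.

Lemma ispan_trans S S' w : (forall s, S s -> ispan S' s) -> ispan S w -> ispan S' w.
Proof. by move=> SS'; apply: ispan_min (submodule_ispan S') SS' w. Qed.

Lemma ispan_one_of_primitive S (p : {poly int}) :
  zcontents p = 1 -> (forall i, ispan S (p`_i)%:~R) -> ispan S 1.
Proof.
move=> p_prim Sp.
have Sgcd n : ispan S ((\big[gcdn/0%N]_(i < n) absz p`_i)%:R).
  elim: n => [|n IHn]; first by rewrite big_ord0; apply: ispan0.
  rewrite big_ord_recr /=; set g := \big[gcdn/0%N]_(i < n) _.
  have [u [v uvE]] := Bezoutz g p`_n.
  rewrite -[(gcdn _ _)%:R]/((gcdz g p`_n)%:~R) -uvE rmorphD !rmorphM /=.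
  by apply: ispanD; apply: ispanM (OK_intr _) _.
move: p_prim (Sgcd (size p)); rewrite /zcontents => /(congr1 absz).
by rewrite abszM absz_nat => /eqP; rewrite muln_eq1 => /andP[_ /eqP ->].
Qed.

Lemma intrK_eq0 (c : int) : ((c%:~R : K) == 0) = (c == 0).
Proof. by rewrite -(rmorph_int (in_alg K)) fmorph_eq0 intr_eq0. Qed.

Lemma primitive_poly_root x :
  exists p : {poly int}, zcontents p = 1 /\ root (map_poly intr p) x.
Proof.
have [/polyOver1P[q minE] mon_q] := (minPolyOver 1 x, monic_minPoly 1 x).
have qx := root_minPoly 1 x; rewrite minE in mon_q qx.
have [z [a a_neq0 qE]] := rat_poly_scale q.
have intrE (c : int) : (c%:~R : K) = in_alg K c%:~R by rewrite /= alg_num_field ratr_int.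
have zE : map_poly intr z = map_poly (in_alg K) (a%:~R *: q).
  rewrite qE scalerA mulfV ?intr_eq0 // scale1r -map_poly_comp.
  by apply: eq_map_poly => c; rewrite intrE.
have z_neq0 : z != 0.
  apply: contraTneq mon_q => z0.
  by rewrite qE z0 !map_poly0 scaler0 map_poly0 monicE lead_coef0 eq_sym oner_eq0.
exists (zprimitive z); split; first by rewrite zcontents_primitive z_neq0.
have : root (map_poly intr z) x by rewrite zE map_polyZ /root hornerZ (eqP qx) mulr0.
rewrite {1}(zpolyEprim z) map_polyZ /root hornerZ mulf_eq0.
by rewrite /= intrK_eq0 zcontents_eq0 (negPf z_neq0).
Qed.

Definition prodS S T z : Prop := exists s t, [/\ S s, T t & z = s * t].

Definition denom x t : Prop := OK t /\ OK (t * x).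

Lemma denom0 x : denom x 0.
Proof. by rewrite /denom mul0r; split; apply: OK0. Qed.

Lemma gen2_l a b : gen2 a b a.
Proof. by exists 1, 0; split; [apply: OK1 | split; [apply: OK0 | ring]]. Qed.

Lemma gen2_r a b : gen2 a b b.
Proof. by exists 0, 1; split; [apply: OK0 | split; [apply: OK1 | ring]]. Qed.

Lemma gen2N a b : gen2 a b (- b).
Proof. by exists 0, (-1); split; [apply: OK0 | split; [apply: OK_intr (-1) | ring]]. Qed.

(* With D_x := denom x, this says D_x (1, x) = O_K. A primitive integer polynomial
   of x factors as ('X - x) q with q integral, and its coefficients
   q_(k-1) - q_k x lie in D_x (1, x). *)
Theorem ispan_denom_gen2 x : ispan (prodS (denom x) (gen2 1 x)) 1.
Proof.
have [p [p_prim px]] := primitive_poly_root x.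
set P := map_poly intr p in px; have /factor_theorem [q PE] := px.
have OKq : forall k, OK q`_k.
  by apply: (@OK_coef_divXsubC x) => k; rewrite -PE coef_map; apply: OK_intr.
have PkE k : P`_k = (q * 'X)`_k * 1 + q`_k * (- x).
  by rewrite PE mulrBr coefB coefMC; ring.
have OKqX k : OK (q * 'X)`_k by rewrite coefMX; case: (k == 0)%N; [apply: OK0 | apply: OKq].
have Dq k : denom x q`_k.
  split=> //; have -> : q`_k * x = (q * 'X)`_k - P`_k by rewrite PkE; ring.
  by apply: OKB => //; rewrite coef_map; apply: OK_intr.
have DqX k : denom x (q * 'X)`_k.
  by rewrite coefMX; case: (k == 0)%N; [apply: denom0 | apply: Dq].
apply: (ispan_one_of_primitive _ _ p_prim) => k; rewrite -coef_map -/P PkE.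
apply: ispanD; apply: ispan_gen.
  by exists (q * 'X)`_k, 1; split=> //; apply: gen2_l.
by exists q`_k, (- x); split=> //; apply: gen2N.
Qed.

Lemma gen2_of_denom_mul x z : (forall t, denom x t -> OK (z * t)) -> gen2 1 x z.
Proof.
move=> OKzD; rewrite -[z]mulr1.
apply: ispan_min (submodule_mull z (submodule_gen2 1 x)) _ 1 (ispan_denom_gen2 x).
move=> _ [t [_ [Dt [r [s [OKr [OKs ->]]]] ->]]].
have OKzt := OKzD t Dt.
by exists (z * t * r), (z * t * s); do 2 (split; first exact: OKM); ring.
Qed.

Lemma OK_of_gen2_stable x u : gen2 1 x u -> gen2 1 x (u * x) -> OK u.
Proof.
move=> [a [b [OKa [OKb uE]]]] [a' [b' [OKa' [OKb' uxE]]]]; rewrite -[u]mulr1.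
apply: ispan_min (submodule_mull u (submodule_OK)) _ 1 (ispan_denom_gen2 x).
move=> _ [t [_ [[OKt OKtx] [r [s [OKr [OKs ->]]]] ->]]].
have utE : u * t = a * t + b * (t * x) by rewrite uE; ring.
have uxtE : u * x * t = a' * t + b' * (t * x) by rewrite uxE; ring.
have -> : u * (t * (r * 1 + s * x)) = r * (u * t) + s * (u * x * t) by ring.
by rewrite utE uxtE; apply: OKD; apply: OKM => //; apply: OKD; apply: OKM.
Qed.

Lemma ispan_prodM {S T y z} : ispan S y -> ispan T z -> ispan (prodS S T) (y * z).
Proof.
move=> Sy Tz; apply: ispan_min (submodule_mulr z (submodule_ispan _)) _ y Sy => s Ss.
apply: ispan_min (submodule_mull s (submodule_ispan _)) _ z Tz => t Tt.
by apply: ispan_gen; exists s, t.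
Qed.

Definition invertible S : Prop :=
  exists T, (forall s t, S s -> T t -> OK (s * t)) /\ ispan (prodS S T) 1.

Lemma invertible_span {S S'} : invertible S' ->
  (forall s, S s -> ispan S' s) -> (forall s, S' s -> ispan S s) -> invertible S.
Proof.
move=> [T [OKS'T S'T1]] SS' S'S; exists T; split.
  move=> s t Ss Tt; apply: (ispan_min (submodule_mulr t submodule_OK) _ s (SS' s Ss)).
  by move=> s' S's'; apply: OKS'T.
apply: ispan_trans S'T1 => _ [s' [t [S's' Tt ->]]].
exact: ispan_prodM (S'S s' S's') (ispan_gen Tt).
Qed.

Lemma invertible_eq {S S'} : invertible S' -> (forall z, S z <-> S' z) -> invertible S.
Proof.
by move=> invS' SS'; apply: invertible_span invS' _ _ => s /SS' Ss; apply: ispan_gen.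
Qed.

Lemma invertible_pair a b : a != 0 -> invertible (fun z => z = a \/ z = b).
Proof.
move=> a_neq0; set x := b / a.
have aE t : a * (t / a) = t by rewrite mulrCA mulfV ?mulr1.
have bE t : b * (t / a) = t * x by rewrite /x; ring.
pose T z := exists2 t, denom x t & z = t / a.
exists T; split; first by move=> s _ [->|->] [t [OKt OKtx] ->]; rewrite ?aE ?bE.
apply: ispan_trans (ispan_denom_gen2 x) => _ [t [_ [Dt [r [s [OKr [OKs ->]]]] ->]]].
have -> : t * (r * 1 + s * x) = r * (a * (t / a)) + s * (b * (t / a)).
  by rewrite aE bE; ring.
have Tt : T (t / a) by exists t.
by apply: ispanD; apply: ispanM => //; apply: ispan_gen; [exists a | exists b];
  exists (t / a); split; auto.
Qed.

(* Pruefer: (A + B)(B + C)(C + A) = (A + B + C)(AB + BC + CA). *)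
Lemma invertible_union3 {A B C : K -> Prop} :
  invertible (fun z => A z \/ B z) -> invertible (fun z => B z \/ C z) ->
  invertible (fun z => C z \/ A z) -> invertible (fun z => A z \/ B z \/ C z).
Proof.
move=> [U [OK_ABU ABU1]] [V [OK_BCV BCV1]] [W [OK_CAW CAW1]].
pose ABC z := A z \/ B z \/ C z.
pose P3 a b c := (A a \/ B a) /\ (B b \/ C b) /\ (C c \/ A c).
pose mixed y z := (A y /\ B z) \/ (B y /\ C z) \/ (C y /\ A z).
have P3_mixed a b c : P3 a b c ->
    exists s y z, [/\ ABC s, mixed y z & a * b * c = s * (y * z)].
  rewrite /P3 /ABC /mixed => P3abc.
  have : (ABC a /\ (mixed b c \/ mixed c b)) \/ (ABC b /\ (mixed a c \/ mixed c a))
         \/ (ABC c /\ (mixed a b \/ mixed b a)) by rewrite /ABC /mixed; tauto.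
  case=> [[? [?|?]]|[[? [?|?]]|[? [?|?]]]];
    [exists a, b, c | exists a, c, b | exists b, a, c | exists b, c, a
    | exists c, a, b | exists c, b, a]; split=> //; ring.
have mixed_P3 s y z : ABC s -> mixed y z ->
    exists a b c, P3 a b c /\ s * (y * z) = a * b * c.
  move=> ABCs myz.
  have : P3 s y z \/ P3 s z y \/ P3 y s z \/ P3 y z s \/ P3 z s y \/ P3 z y s
    by move: ABCs myz; rewrite /P3 /ABC /mixed; tauto.
  case=> [?|[?|[?|[?|[?|?]]]]];
    [exists s, y, z | exists s, z, y | exists y, s, z | exists y, z, s
    | exists z, s, y | exists z, y, s]; split=> //; ring.
pose M p := exists y z, mixed y z /\ p = y * z.
pose UVW q := exists u v w, [/\ U u, V v, W w & q = u * v * w].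
exists (prodS M UVW); split.
  move=> s _ ABCs [_ [_ [[y [z [myz ->]]] [u [v [w [Uu Vv Ww ->]]]] ->]]].
  have [a [b [c [[ABa [BCb CAc]] abcE]]]] := mixed_P3 s y z ABCs myz.
  have -> : s * (y * z * (u * v * w)) = a * u * (b * v) * (c * w).
    by rewrite mulrA abcE; ring.
  exact: OKM (OKM (OK_ABU _ _ ABa Uu) (OK_BCV _ _ BCb Vv)) (OK_CAW _ _ CAc Ww).
have := ispan_prodM (ispan_prodM ABU1 BCV1) CAW1; rewrite !mulr1.
apply: ispan_trans.
move=> _ [_ [_ [[_ [_ [[a [u [ABa Uu ->]]] [b [v [BCb Vv ->]]] ->]]]
              [c [w [CAc Ww ->]]] ->]]].
have [s [y [z [ABCs myz abcE]]]] := P3_mixed a b c (conj ABa (conj BCb CAc)).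
apply: ispan_gen; exists s, (y * z * (u * v * w)); split => //.
  by exists (y * z), (u * v * w); split => //; [exists y, z | exists u, v, w].
have -> : a * u * (b * v) * (c * w) = a * b * c * (u * v * w) by ring.
by rewrite abcE; ring.
Qed.

Lemma invertible_cons b (l : seq K) : b != 0 -> invertible (fun z => z = b \/ z \in l).
Proof.
elim: l b => [|c l IHl] b b_neq0.
  by apply: invertible_eq (invertible_pair b b b_neq0) _ => z; split; intuition.
have [->|c_neq0] := eqVneq c 0.
  apply: invertible_span (IHl b b_neq0) _ _ => z /=.
    by rewrite in_cons => -[->|/orP[/eqP->|zl]]; [| apply: ispan0 |]; apply: ispan_gen; auto.
  by case=> [->|zl]; apply: ispan_gen; rewrite /= ?in_cons ?zl ?orbT; auto.
have lb : invertible (fun z => z \in l \/ z = b).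
  by apply: invertible_eq (IHl b b_neq0) _ => z; split; case; auto.
apply: invertible_eq (invertible_union3 (invertible_pair b c b_neq0) (IHl c c_neq0) lb) _.
by move=> z; rewrite in_cons; split=> [[->|/orP[/eqP->|zl]]|[->|[->|zl]]];
  rewrite ?eqxx ?zl ?orbT; auto.
Qed.

Local Notation n := (\dim {:K}).
Local Notation bK := (vbasis {:K}).

Definition regmx w : 'M[rat]_n := mxof bK bK (amull w).

Definition trK w : rat := \tr (regmx w).

Lemma regmx0 : regmx 0 = 0.
Proof. by rewrite /regmx !linear0. Qed.

Lemma regmxD w w' : regmx (w + w') = regmx w + regmx w'.
Proof. by rewrite /regmx !linearD. Qed.

Lemma regmxZ (c : rat) w : regmx (c *: w) = c *: regmx w.
Proof. by rewrite /regmx !linearZ. Qed.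

Lemma regmxM w w' : regmx (w * w') = regmx w *m regmx w'.
Proof.
rewrite /regmx; have -> : amull (w * w') = (amull w' \o amull w)%VF.
  by apply/lfunP => u; rewrite comp_lfunE !lfunE /= mulrCA mulrA.
exact/mxof_comp/vbasisP.
Qed.

Lemma regmx1 : regmx 1 = 1%:M.
Proof. by rewrite /regmx amull1 mxof1 //; apply/basis_free/vbasisP. Qed.

Lemma regmx_intr (c : int) : regmx c%:~R = (c%:~R)%:M.
Proof. by rewrite -[c%:~R](rmorph_int (in_alg K)) /= regmxZ regmx1 scalemx1. Qed.

Lemma trK0 : trK 0 = 0.
Proof. by rewrite /trK regmx0 mxtrace0. Qed.

Lemma trKD w w' : trK (w + w') = trK w + trK w'.
Proof. by rewrite /trK regmxD mxtraceD. Qed.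

Lemma trKZ (c : rat) w : trK (c *: w) = c * trK w.
Proof. by rewrite /trK regmxZ mxtraceZ. Qed.

Lemma trK1 : trK 1 = n%:R.
Proof. by rewrite /trK regmx1 mxtrace1. Qed.

Lemma trK_sum (F : 'I_n -> K) : trK (\sum_i F i) = \sum_i trK (F i).
Proof. exact: (big_morph trK trKD trK0). Qed.

Lemma eigenvalue_regmx_Aint w (z : algC) :
  OK w -> eigenvalue (map_mx ratr (regmx w)) z -> z \in Aint.
Proof.
case=> p [mon_p pw] /eigenvalueP [v vB v_neq0].
have vq (q : {poly int}) :
    v *m map_mx ratr (regmx (map_poly intr q).[w]) = (map_poly intr q).[z] *: v.
  elim/poly_ind: q => [|q c IHq].
    by rewrite !map_poly0 !horner0 regmx0 map_mx0 mulmx0 scale0r.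
  rewrite !rmorphD !rmorphM /= !map_polyX !map_polyC /= !hornerE.
  rewrite regmxD regmxM map_mxD mulmxDr map_mxM mulmxA IHq -scalemxAl vB.
  rewrite regmx_intr map_scalar_mx /= ratr_int mul_mx_scalar scalerA scalerDl.
  by rewrite mulrC.
apply: (@root_monic_Aint (map_poly intr p)).
- move: (vq p); rewrite (rootP pw) regmx0 map_mx0 mulmx0.
  by move/esym/eqP; rewrite scaler_eq0 (negPf v_neq0) orbF.
- by rewrite monicE lead_coef_map_eq (monicP mon_p) /= ?oner_eq0.
- by apply/polyOverP => i; rewrite coef_map intr_int.
Qed.

(* trK w is the sum of the eigenvalues of regmx w: a rational algebraic integer. *)
Lemma trK_int w : OK w -> trK w \is a Num.int.
Proof.
move=> OKw; set B := map_mx (ratr : rat -> algC) (regmx w).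
have [r charE] := closed_field_poly_normal (char_poly B).
rewrite (monicP (char_poly_monic B)) scale1r in charE.
have size_r : size r = n by have := size_char_poly B; rewrite charE size_prod_XsubC => -[].
have trBE : \tr B = \sum_(z <- r) z.
  have := char_poly_trace B (adim_gt0 _); rewrite charE.
  have -> : n.-1 = (size r).-1 by rewrite size_r.
  by rewrite coefPn_prod_XsubC ?size_r -?lt0n ?adim_gt0 // => /oppr_inj.
have : ratr (trK w) \in Aint.
  rewrite /trK -trace_map_mx -/B trBE big_seq rpred_sum // => z zr.
  by apply: eigenvalue_regmx_Aint OKw _; rewrite eigenvalue_root_char charE root_prod_XsubC.
move=> /(Cint_rat_Aint (Crat_rat _)) /intrP [m trE].
by apply/intrP; exists m; apply: (fmorph_inj (ratr : rat -> algC)); rewrite rmorph_int.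
Qed.

Lemma scale_intr (c : int) u : (c%:~R : rat) *: u = c%:~R * u.
Proof. by rewrite -mulr_algl alg_num_field ratr_int. Qed.

Lemma OK_scale_intr y : exists2 m : int, m != 0 & OK (m%:~R * y).
Proof.
have [p [p_prim py]] := primitive_poly_root y.
have p_neq0 : p != 0 by apply/eqP => p0; move: p_prim; rewrite p0 zcontents0.
have leadE : lead_coef (map_poly intr p) = (lead_coef p)%:~R :> K.
  by rewrite lead_coef_map_eq // intrK_eq0 lead_coef_eq0.
exists (lead_coef p); first by rewrite lead_coef_eq0.
rewrite -leadE; apply: OK_lead_coef_mul_root py => [i|].
  by rewrite coef_map; apply: OK_intr.
by rewrite -lead_coef_eq0 leadE intrK_eq0 lead_coef_eq0.
Qed.

Lemma OK_common_scale (s : seq K) :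
  exists2 m : int, m != 0 & forall y, y \in s -> OK (m%:~R * y).
Proof.
elim: s => [|y s [m m_neq0 OKms]]; first by exists 1.
have [k k_neq0 OKky] := OK_scale_intr y.
exists (m * k) => [|z]; first by rewrite mulf_neq0.
rewrite in_cons rmorphM /= => /predU1P [->|zs].
  by rewrite -mulrA; apply: OKM (OK_intr m) OKky.
by rewrite mulrAC; apply: OKM (OKms z zs) (OK_intr k).
Qed.

Lemma det_trace_form_neq0 : \det (\matrix_(i, j) trK (bK`_i * bK`_j) : 'M_n) != 0.
Proof.
apply/negP => /det0P [v v_neq0 vG0]; set y := vecof bK v.
have y_neq0 : y != 0 by rewrite vecof_eq0 ?vbasisP.
have trKyb (j : 'I_n) : trK (y * bK`_j) = 0.
  have := congr1 (fun A : 'rV[rat]_n => A 0 j) vG0; rewrite !mxE => <-.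
  rewrite /y /vecof mulr_suml trK_sum; apply: eq_bigr => i _.
  by rewrite -scalerAl trKZ mxE.
have trKy z : trK (y * z) = 0.
  rewrite (coord_vbasis (memvf z)) mulr_sumr trK_sum big1 // => j _.
  by rewrite -scalerAr trKZ trKyb mulr0.
have := trKy y^-1; rewrite mulfV // trK1 => /eqP; rewrite pnatr_eq0.
by apply/negP; rewrite -lt0n adim_gt0.
Qed.

(* Cramer's rule on the (integral, nondegenerate) trace form bounds the
   denominators of the coordinates of integers. *)
Theorem OK_lattice : exists (e : 'I_n -> K) (D : int),
  [/\ D != 0, forall i, OK (e i) &
      forall w, OK w -> exists s : 'I_n -> int, D%:~R * w = \sum_i (s i)%:~R * e i].
Proof.
have [M M_neq0 OKMb] := OK_common_scale bK.
pose e (i : 'I_n) := (M%:~R : rat) *: bK`_i.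
have OKe i : OK (e i).
  by rewrite /e scale_intr; apply: OKMb; apply: mem_nth; rewrite size_tuple ltn_ord.
have Mw w : (M%:~R : rat) *: w = \sum_i coord bK i w *: e i.
  rewrite {1}(coord_vbasis (memvf w)) scaler_sumr; apply: eq_bigr => i _.
  by rewrite /e !scalerA mulrC.
pose G := \matrix_(i, j) trK (e i * e j); pose GZ := map_mx (@Num.floor _) G.
have GE : G = map_mx intr GZ.
  by apply/matrixP => i j; rewrite !mxE floorK //; apply/trK_int/OKM.
have detGE : ((\det GZ)%:~R : rat) = \det G by rewrite GE det_map_mx.
have detG_neq0 : \det G != 0.
  have -> : G = (M%:~R ^+ 2) *: \matrix_(i, j) trK (bK`_i * bK`_j).
    by apply/matrixP => i j; rewrite !mxE /e -scalerAl -scalerAr !trKZ mulrA expr2.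
  by rewrite detZ mulf_neq0 ?expf_neq0 ?intr_eq0 ?det_trace_form_neq0.
exists e, (\det GZ * M); split=> // [|w OKw].
  by rewrite mulf_neq0 // -(intr_eq0 rat) detGE.
pose c := \row_i coord bK i w.
have cG_int j : (c *m G) 0 j \is a Num.int.
  have -> : (c *m G) 0 j = trK ((M%:~R : rat) *: w * e j).
    rewrite Mw mulr_suml trK_sum !mxE; apply: eq_bigr => i _.
    by rewrite -scalerAl trKZ !mxE.
  by apply/trK_int/OKM => //; rewrite scale_intr; apply: OKM (OK_intr M) OKw.
pose cZ := map_mx (@Num.floor _) (c *m G).
have cGE : c *m G = map_mx intr cZ.
  by apply/matrixP => i j; rewrite (ord1 i) [RHS]mxE [cZ _ _]mxE floorK ?cG_int.
have cramer : \det G *: c = map_mx intr (cZ *m \adj GZ).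
  by rewrite map_mxM -cGE map_mx_adj -GE -mulmxA mul_mx_adj mul_mx_scalar.
exists (fun i => (cZ *m \adj GZ) 0 i).
rewrite -scale_intr rmorphM /= detGE -scalerA Mw scaler_sumr; apply: eq_bigr => i _.
rewrite -scale_intr scalerA; congr (_ *: _).
by have := congr1 (fun A : 'rV[rat]_n => A 0 i) cramer; rewrite !mxE.
Qed.

Lemma ideal_intr {I} : is_ideal I -> (exists y, I y /\ y != 0) ->
  exists2 m : int, m != 0 & I m%:~R.
Proof.
move=> [_ [_ [_ IM]]] [y [Iy y_neq0]]; have [m m_neq0 OKmy] := OK_scale_intr y^-1.
by exists m => //; rewrite -[m%:~R](mulfVK y_neq0); apply: IM.
Qed.

Lemma OK_residues (m : int) : m != 0 -> exists R : seq K, forall w, OK w ->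
  exists2 r, r \in R & exists2 k, OK k & w = r + m%:~R * k.
Proof.
move=> m_neq0; have [e [D [D_neq0 OKe De]]] := OK_lattice.
pose d := D * m; have d_neq0 : d != 0 by rewrite mulf_neq0.
pose rep (f : {ffun 'I_n -> 'I_(absz d)}) := (D%:~R)^-1 * \sum_i (f i)%:R * e i.
exists [seq rep f | f <- enum {ffun 'I_n -> 'I_(absz d)}] => w /De [s DwE].
have mod_lt i : (absz (s i %% d)%Z < absz d)%N.
  by rewrite -ltz_nat gez0_abs ?modz_ge0 // abszE ltz_mod.
exists (rep [ffun i => Ordinal (mod_lt i)]); first by apply: map_f; rewrite mem_enum.
exists (\sum_i ((s i %/ d)%Z)%:~R * e i).
  by apply: OK_sum => i _; apply: OKM (OK_intr _) (OKe i).
have DK_neq0 : (D%:~R : K) != 0 by rewrite intrK_eq0.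
apply: (mulfI DK_neq0); rewrite DwE mulrDr /rep mulVKf // mulrA mulr_sumr -big_split /=.
apply: eq_bigr => i _; rewrite ffunE /=.
rewrite -[((absz _)%:R)]/(((absz (s i %% d)%Z)%:Z)%:~R) gez0_abs ?modz_ge0 //.
by rewrite {1}(divz_eq (s i) d) /d rmorphD !rmorphM /=; ring.
Qed.

Lemma exists_filter {T : eqType} (P : T -> Prop) (s : seq T) :
  exists s' : seq T,
    (forall c : T, c \in s' -> P c) /\ (forall c : T, c \in s -> P c -> c \in s').
Proof.
elim: s => [|a s [s' [s'P ss']]]; first by exists [::].
have [Pa|nPa] := classic (P a); [exists (a :: s') | exists s']; split=> z.
- by rewrite in_cons => /predU1P [->|/s'P].
- by rewrite !in_cons => /predU1P [->|/ss' zs' /zs'->]; rewrite ?eqxx ?orbT.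
- exact: s'P.
- by rewrite in_cons => /predU1P [->|/ss'].
Qed.

(* Generators: a nonzero integer m of I and the elements of I among the residues mod m. *)
Lemma ideal_fg {I} : is_ideal I -> (exists y, I y /\ y != 0) ->
  exists b (l : seq K), [/\ b != 0, forall s, s = b \/ s \in l -> I s &
    forall w, I w -> ispan (fun s => s = b \/ s \in l) w].
Proof.
move=> idI nzI; have [m m_neq0 Im] := ideal_intr idI nzI.
have [IOK [_ [ID IM]]] := idI; have [R residues] := OK_residues _ m_neq0.
have [l [lI Rl]] := exists_filter I R.
exists m%:~R, l; split=> [|s [->|/lI] //|w Iw]; first by rewrite intrK_eq0.
have [r rR [k OKk wE]] := residues w (IOK w Iw).
have Ir : I r.
  have -> : r = w + (- k) * m%:~R by rewrite wE; ring.
  exact: ID Iw (IM _ _ (OKN OKk) Im).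
rewrite wE mulrC; apply: ispanD; first by apply: ispan_gen; right; apply: Rl.
by apply: ispanM OKk (ispan_gen _); left.
Qed.

Lemma ideal_invertible {I} : is_ideal I -> (exists y, I y /\ y != 0) -> invertible I.
Proof.
move=> idI nzI; have [b [l [b_neq0 blI Ibl]]] := ideal_fg idI nzI.
apply: invertible_span (invertible_cons b l b_neq0) Ibl _ => s bls.
exact/ispan_gen/blI.
Qed.

Lemma gen2_ideal a b : OK a -> OK b -> is_ideal (gen2 a b).
Proof.
move=> OKa OKb; have [g0 gD gM] := submodule_gen2 a b; split=> //.
by move=> _ [r [s [OKr [OKs ->]]]]; apply: OKD; apply: OKM.
Qed.

Lemma ideal_div_gen2 a b : b != 0 -> ideal_eq (ideal_div (gen1 b) (gen2 a b)) (denom (a / b)).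
Proof.
move=> b_neq0 t; split=> [tD | [OKt OKtx] _ [r [s [OKr [OKs ->]]]]].
  have [[r [OKr tbE]] [r' [OKr' taE]]] := (tD b (gen2_r a b), tD a (gen2_l a b)).
  by split; [rewrite (mulIf b_neq0 tbE) | rewrite mulrA taE mulfK].
by exists (r * (t * (a / b)) + s * t); split; [apply: OKD; apply: OKM | field].
Qed.

Lemma OK_unitP c : OK c -> OK_unit c <-> ideal_eq (gen1 c) (@OK K).
Proof.
move=> OKc; split=> [[_ [d [OKd cd1]]] y | cO].
  split=> [[r [OKr ->]] | OKy]; first exact: OKM.
  by exists (y * d); split; [apply: OKM | rewrite -mulrA [d * c]mulrC cd1 mulr1].
have [d [OKd dcE]] := proj2 (cO 1) OK1.
by split=> //; exists d; split=> //; rewrite mulrC dcE.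
Qed.

Lemma inseverable_gen2 a b : OK a -> OK b -> reduced_frac a b -> inseverable (gen2 a b).
Proof.
move=> OKa OKb [b_neq0 red]; split; first exact: gen2_ideal.
split=> [|c OKc abc]; first by exists b; split=> //; apply: gen2_r.
apply/OK_unitP => //; apply: NNPP => c_nunit; apply: (red c OKc c_nunit).
  by have [r [OKr ->]] := abc a (gen2_l a b); exists r; rewrite mulrC.
by have [r [OKr ->]] := abc b (gen2_r a b); exists r; rewrite mulrC.
Qed.

Lemma reduced_frac_of_inseverable g a b : b != 0 -> inseverable g ->
  (forall y, g y -> gen2 a b y) -> reduced_frac a b.
Proof.
move=> b_neq0 [_ [_ ins_g]] g_ab; split=> // d OKd d_nunit [k [OKk aE]] [k' [OKk' bE]].
apply/d_nunit/OK_unitP/ins_g => // y /g_ab [r [s [OKr [OKs ->]]]].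
by exists (r * k + s * k'); split; [apply: OKD; apply: OKM | rewrite aE bE; ring].
Qed.

Lemma OK_ratio_of_gen2 {a b a' b'} : b != 0 -> b' != 0 -> a / b = a' / b' ->
  gen2 a' b' a -> gen2 a' b' b -> OK (b / b').
Proof.
move=> b_neq0 b'_neq0 abE [r [s [OKr [OKs aE]]]] [r' [s' [OKr' [OKs' bE]]]].
apply: (@OK_of_gen2_stable (a' / b')).
  by exists s', r'; split=> //; split=> //; rewrite bE; field.
exists s, r; split=> //; split=> //.
have -> : b / b' * (a' / b') = a / b' by rewrite -abE; field; apply/andP.
by rewrite aE; field.
Qed.

Lemma gen1_eq_of_gen2_eq {a b a' b'} : b != 0 -> b' != 0 -> a / b = a' / b' ->
  ideal_eq (gen2 a b) (gen2 a' b') -> ideal_eq (gen1 b) (gen1 b').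
Proof.
move=> b_neq0 b'_neq0 abE abE'.
have OKbb' : OK (b / b').
  by apply: (OK_ratio_of_gen2 b_neq0 b'_neq0 abE); apply/abE'; [apply: gen2_l | apply: gen2_r].
have OKb'b : OK (b' / b).
  by apply: (OK_ratio_of_gen2 b'_neq0 b_neq0 (esym abE)); apply/abE';
    [apply: gen2_l | apply: gen2_r].
move=> y; split=> -[r [OKr ->]].
  by exists (r * (b / b')); split; [apply: OKM | rewrite -mulrA divfK].
by exists (r * (b' / b)); split; [apply: OKM | rewrite -mulrA divfK].
Qed.

Section IdealOfDiv.
Context {x b : K} {g : K -> Prop}.
Hypotheses (b_neq0 : b != 0) (gE : ideal_eq (denom x) (ideal_div (gen1 b) g)).

Lemma ideal_div_sub_gen2 y : g y -> gen2 (b * x) b y.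
Proof.
move=> gy; have [r [s [OKr [OKs yE]]]] : gen2 1 x (y / b).
  apply: gen2_of_denom_mul => t /gE /(_ y gy) [r [OKr tyE]].
  by rewrite mulrAC [y * t]mulrC tyE mulfK.
by exists s, r; split=> //; split=> //; rewrite -(divfK b_neq0 y) yE; ring.
Qed.

(* w g^-1 = w D_x / b is integral, so w = w * 1 lies in w g^-1 g, a subset of g. *)
Lemma gen2_sub_ideal_div w : is_ideal g -> invertible g -> gen2 (b * x) b w -> g w.
Proof.
move=> idg [T [OKgT gT1]] [r [s [OKr [OKs wE]]]].
have OKwT t : T t -> OK (w * t).
  move=> Tt; have [OKbt OKbtx] : denom x (b * t).
    by apply/gE => y gy; exists (y * t); split; [apply: OKgT | ring].
  have -> : w * t = r * (b * t * x) + s * (b * t) by rewrite wE; ring.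
  by apply: OKD; apply: OKM.
rewrite -[w]mulr1; apply: ispan_min (submodule_mull w (submodule_ideal idg)) _ 1 gT1.
move=> _ [y [t [gy Tt ->]]]; have [_ [_ [_ gM]]] := idg.
by rewrite mulrCA mulrC; apply: gM (OKwT t Tt) gy.
Qed.

End IdealOfDiv.

Lemma gen2_eq_of_ideal_div x b g : b != 0 -> inseverable g ->
  ideal_eq (denom x) (ideal_div (gen1 b) g) -> ideal_eq g (gen2 (b * x) b).
Proof.
move=> b_neq0 [idg [nzg _]] gE y; split; first exact: ideal_div_sub_gen2.
exact: gen2_sub_ideal_div gE y idg (ideal_invertible idg nzg).
Qed.

Lemma same_class_gen2 a {b u} : OK b -> OK u -> b != 0 -> u != 0 ->
  same_class (gen2 a b) (gen2 (u * (a / b)) u).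
Proof.
move=> OKb OKu b_neq0 u_neq0; exists u, b; do 4 split=> //.
move=> z; split=> -[_ [[r [s [OKr [OKs ->]]]] ->]].
  by exists (r * (u * (a / b)) + s * u); split; [exists r, s | field].
by exists (r * a + s * b); split; [exists r, s | field].
Qed.

Lemma same_class_eqr {I J J'} : ideal_eq J J' -> same_class I J' -> same_class I J.
Proof.
move=> JJ' [al [be [OKal [OKbe [al_neq0 [be_neq0 E]]]]]].
exists al, be; do 4 split=> //; move=> z; rewrite E.
by split=> -[y [/JJ' Jy ->]]; exists y.
Qed.

End NumberField.

Theorem proposition3p3 (K : fieldExtType rat) (a1 b1 b2 : K) :
  OK a1 -> OK b1 -> b1 != 0 -> ~ OK_unit b1 ->
  reduced_frac a1 b1 ->
  ~ principal (gen2 a1 b1) -> inseverable (gen2 a1 b1) ->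
  OK b2 -> b2 != 0 -> ~ ideal_eq (gen1 b2) (gen1 b1) ->
  ((exists a2 : K, OK a2 /\ a2 / b2 = a1 / b1 /\ reduced_frac a2 b2) <->
   (exists g2 : K -> Prop, inseverable g2 /\ ~ ideal_eq g2 (gen2 a1 b1) /\
      ideal_eq (ideal_div (gen1 b1) (gen2 a1 b1)) (ideal_div (gen1 b2) g2)))
  /\
  (forall g2 : K -> Prop, inseverable g2 -> ~ ideal_eq g2 (gen2 a1 b1) ->
      ideal_eq (ideal_div (gen1 b1) (gen2 a1 b1)) (ideal_div (gen1 b2) g2) ->
      same_class (gen2 a1 b1) g2).
Proof.
move=> OKa1 OKb1 b1_neq0 _ _ _ _ OKb2 b2_neq0 b21_nassoc; set x := a1 / b1.
have div1 := ideal_div_gen2 a1 b1 b1_neq0.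
have g2E g2 : inseverable g2 ->
    ideal_eq (ideal_div (gen1 b1) (gen2 a1 b1)) (ideal_div (gen1 b2) g2) ->
    ideal_eq g2 (gen2 (b2 * x) b2).
  move=> ins2 div12; apply: gen2_eq_of_ideal_div b2_neq0 ins2 _ => t.
  by split=> [/div1/div12 | /div12/div1].
split; first split.
- case=> a2 [OKa2 [a2E red2]]; exists (gen2 a2 b2).
  split; first exact: inseverable_gen2.
  split; first by move/(gen1_eq_of_gen2_eq b2_neq0 b1_neq0 a2E).
  have div2 := ideal_div_gen2 a2 b2 b2_neq0; rewrite a2E in div2.
  by move=> t; split=> [/div1/div2 | /div2/div1].
- case=> g2 [ins2 [_ /(g2E g2 ins2) g2E']].
  have [[OKg2 _] _] := ins2.
  exists (b2 * x); split; first by apply/OKg2/g2E'/gen2_l.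
  split; first by rewrite mulrC mulKf.
  by apply: reduced_frac_of_inseverable b2_neq0 ins2 _ => y /g2E'.
- move=> g2 ins2 _ /(g2E g2 ins2) g2E'.
  exact: same_class_eqr g2E' (same_class_gen2 a1 OKb1 OKb2 b1_neq0 b2_neq0).
Qed.
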